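(* Let $G$ and $H$ be finite connected free graphs. If there exists an onto edge homomorphism from $G$ to $H$, then $\phi(G)\le \phi(H)$.
   Context: All graphs are finite and simple. A homomorphism $f:G\to H$ is a map $f:V(G)\to V(H)$ such that $uv\in E(G)$ implies $f(u)f(v)\in E(H)$; it is an onto edge homomorphism if every edge of $H$ equals $f(x)f(y)$ for some edge $xy\in E(G)$. An independent set of a graph $G$ is called a free independent set if it is contained in at least two distinct maximal independent sets of $G$. A graph $G$ is free if every vertex of $G$ lies in some free independent set. The free chromatic number $\phi(G)$ is the minimum positive integer $t$ such that $V(G)=V_1\cup\cdots\cup V_t$ is a partition of $V(G)$ into sets each of which is a free independent set of $G$; if $G$ is not free, $\phi(G)=\infty$. *)

From Stdlib Require Import ClassicalEpsilon.
From mathcomp Require Import all_boot.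
Set Implicit Arguments. Unset Strict Implicit. Unset Printing Implicit Defensive.

Section Graphs.
Variable T : finType.
Variable e : rel T.

Definition simple_graph : Prop := symmetric e /\ irreflexive e.

(* connected graphs are nonempty (standard convention) *)
Definition connected_graph : Prop :=
  (0 < #|T|)%N /\ forall x y : T, connect e x y.

Definition independent (S : {set T}) : bool :=
  [forall x in S, forall y in S, ~~ e x y].

Definition maximal_independent (M : {set T}) : bool := maxset independent M.

Definition free_independent (S : {set T}) : bool :=
  independent S &&
  [exists M1 : {set T}, exists M2 : {set T},
     [&& maximal_independent M1, maximal_independent M2, M1 != M2,
         S \subset M1 & S \subset M2]].

Definition free_graph : Prop :=
  forall v : T, exists S : {set T}, free_independent S /\ v \in S.

Definition free_partition_into (t : nat) : bool :=
  [exists P : {set {set T}},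
     [&& partition P [set: T], [forall B in P, free_independent B] & #|P| == t]].

Definition free_col_pred : pred nat := fun t => (0 < t) && free_partition_into t.

(* free chromatic number; None stands for infinity *)
Definition free_chromatic_number : option nat :=
  match excluded_middle_informative (exists t, free_col_pred t) with
  | left h => Some (ex_minn h)
  | right _ => None
  end.

End Graphs.

Definition le_inf (a b : option nat) : Prop :=
  match a, b with
  | _, None => True
  | None, Some _ => False
  | Some x, Some y => (x <= y)%N
  end.

Definition homomorphism (T1 T2 : finType) (e1 : rel T1) (e2 : rel T2)
  (f : T1 -> T2) : Prop :=
  forall x y, e1 x y -> e2 (f x) (f y).

Definition onto_edge_homomorphism (T1 T2 : finType) (e1 : rel T1) (e2 : rel T2)
  (f : T1 -> T2) : Prop :=
  homomorphism e1 e2 f /\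
  forall u v, e2 u v -> exists x y, e1 x y /\
     ((f x = u /\ f y = v) \/ (f x = v /\ f y = u)).

(* Preimages under an onto edge homomorphism f : G -> H carry free independent
   sets to free independent sets.  Preimages of independent sets are independent,
   and since every edge of H lifts, f @^-1: B is independent only if B is.  If
   M1 != M2 are maximal independent sets containing B, then M1 :|: M2 is not
   independent, so no maximal independent set of G contains both f @^-1: M1 and
   f @^-1: M2; extending each to a maximal one gives two distinct maximal
   independent sets containing f @^-1: B.  Pulling back the blocks of a free
   partition of H therefore yields a free partition of G with at most as many
   blocks. *)
From Stdlib Require Import ClassicalEpsilon.
From mathcomp Require Import all_boot.

Set Implicit Arguments.
Unset Strict Implicit.
Unset Printing Implicit Defensive.

Section Independence.
Variables (T : finType) (e : rel T).

Lemma independentS (A B : {set T}) :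
  A \subset B -> independent e B -> independent e A.
Proof.
move=> /subsetP sAB /forall_inP iB; apply/forall_inP => x Ax.
apply/forall_inP => y /sAB By; exact: (forall_inP (iB _ (sAB _ Ax))).
Qed.

Lemma maximal_independent_setU (M1 M2 : {set T}) :
  maximal_independent e M1 -> maximal_independent e M2 -> M1 != M2 ->
  ~~ independent e (M1 :|: M2).
Proof.
move=> /maxsetP[_ maxM1] /maxsetP[_ maxM2]; apply: contra => iM.
by rewrite -(maxM1 _ iM (subsetUl _ _)) (maxM2 _ iM (subsetUr _ _)).
Qed.

End Independence.

Section PartitionOfType.
Variables (T : finType) (P : {set {set T}}).
Hypothesis partP : partition P [set: T].

Lemma pblock_mem_setT (x : T) : pblock P x \in P.
Proof. by rewrite pblock_mem // (cover_partition partP) inE. Qed.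

Lemma card_partition_setT_gt0 : 0 < #|T| -> 0 < #|P|.
Proof.
by case/card_gt0P => x _; apply/card_gt0P; exists (pblock P x); exact: pblock_mem_setT.
Qed.

End PartitionOfType.

Section PullbackPartition.
Variables (aT rT : finType) (f : aT -> rT) (P : {set {set rT}}).
Hypothesis partP : partition P [set: rT].

Definition pullback_partition : {set {set aT}} :=
  preim_partition (fun x => pblock P (f x)) [set: aT].

Lemma pullback_partitionP : partition pullback_partition [set: aT].
Proof. exact: preim_partitionP. Qed.

Lemma pullback_partition_block (A : {set aT}) :
  A \in pullback_partition -> exists2 B, B \in P & A = f @^-1: B.
Proof.
case/imsetP => x _ ->; exists (pblock P (f x)); first exact: pblock_mem_setT.
have [/eqP covP trivP _] := and3P partP.
by apply/setP => y; rewrite !inE eq_pblock // covP inE.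
Qed.

Lemma card_pullback_partition : #|pullback_partition| <= #|P|.
Proof.
set g := fun x => pblock P (f x).
have -> : pullback_partition = [set [set y | B == g y] | B in g @: [set: aT]].
  by rewrite -imset_comp; apply: eq_imset => x; apply/setP => y; rewrite !inE.
apply: leq_trans (leq_imset_card _ _) (subset_leq_card _).
by apply/subsetP => _ /imsetP[x _ ->]; exact: pblock_mem_setT.
Qed.

End PullbackPartition.

Section OntoEdgeHomomorphism.
Variables (TG TH : finType) (eG : rel TG) (eH : rel TH) (f : TG -> TH).

Lemma independent_preimset (B : {set TH}) : homomorphism eG eH f ->
  independent eH B -> independent eG (f @^-1: B).
Proof.
move=> hom /forall_inP iB; apply/forall_inP => x; rewrite inE => xB.
apply/forall_inP => y; rewrite inE => yB; apply: contra (hom x y) _.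
exact: (forall_inP (iB _ xB)).
Qed.

Hypothesis fP : onto_edge_homomorphism eG eH f.
Let homf : homomorphism eG eH f := proj1 fP.

Lemma preimset_independent (B : {set TH}) :
  independent eG (f @^-1: B) -> independent eH B.
Proof.
case: fP => _ onto /forall_inP iB; apply/forall_inP => u uB.
apply/forall_inP => v vB; apply/negP => /onto[x [y [exy fxy]]].
have [xB yB] : x \in f @^-1: B /\ y \in f @^-1: B.
  by rewrite !inE; case: fxy => -[-> ->].
by move: (forall_inP (iB _ xB) _ yB); rewrite exy.
Qed.

Lemma free_independent_preimset (B : {set TH}) :
  free_independent eH B -> free_independent eG (f @^-1: B).
Proof.
case/andP => iB /existsP[M1 /existsP[M2 /and5P[maxM1 maxM2 neM sBM1 sBM2]]].
rewrite /free_independent independent_preimset //=.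
have [N1 maxN1 sN1] := maxset_exists (independent_preimset homf (maxsetp maxM1)).
have [N2 maxN2 sN2] := maxset_exists (independent_preimset homf (maxsetp maxM2)).
apply/existsP; exists N1; apply/existsP; exists N2.
rewrite /maximal_independent maxN1 maxN2.
rewrite (subset_trans (preimsetS f sBM1) sN1) (subset_trans (preimsetS f sBM2) sN2).
rewrite !andbT /=; apply: contra (maximal_independent_setU maxM1 maxM2 neM).
move=> /eqP eqN; apply: preimset_independent; apply: independentS (maxsetp maxN1).
by rewrite preimsetU subUset sN1 eqN sN2.
Qed.

Lemma free_col_pred_pullback (t : nat) : 0 < #|TG| ->
  free_col_pred eH t -> exists2 s, free_col_pred eG s & s <= t.
Proof.
move=> G_gt0 /andP[_ /existsP[P /and3P[partP freeP /eqP <-]]].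
set Q := pullback_partition f P.
have partQ : partition Q [set: TG] := pullback_partitionP f P.
exists #|Q|; last exact: card_pullback_partition.
rewrite /free_col_pred card_partition_setT_gt0 //=.
apply/existsP; exists Q; rewrite partQ eqxx andbT /=.
apply/forall_inP => A /(pullback_partition_block partP)[B PB ->].
exact/free_independent_preimset/(forall_inP freeP).
Qed.

End OntoEdgeHomomorphism.

Lemma le_free_chromatic_number (T1 T2 : finType) (e1 : rel T1) (e2 : rel T2) :
  (forall t, free_col_pred e2 t -> exists2 s, free_col_pred e1 s & s <= t) ->
  le_inf (free_chromatic_number e1) (free_chromatic_number e2).
Proof.
move=> dom; rewrite /free_chromatic_number.
case: (excluded_middle_informative (exists t, free_col_pred e2 t)) => [h2|_];
  last by case: excluded_middle_informative.
case: ex_minnP => t col2 _; have [s col1 le_st] := dom _ col2.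
case: excluded_middle_informative => [h1|]; last by case; exists s.
by case: ex_minnP => k _ mink; exact: leq_trans (mink _ col1) le_st.
Qed.

Theorem mainTheorem1 (TG TH : finType) (eG : rel TG) (eH : rel TH) :
  simple_graph eG -> simple_graph eH ->
  connected_graph eG -> connected_graph eH ->
  free_graph eG -> free_graph eH ->
  (exists f : TG -> TH, onto_edge_homomorphism eG eH f) ->
  le_inf (free_chromatic_number eG) (free_chromatic_number eH).
Proof.
move=> _ _ [G_gt0 _] _ _ _ [f fP].
apply: le_free_chromatic_number => t; exact: (free_col_pred_pullback fP G_gt0).
Qed.
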